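(* Let $\mathcal{A}$ be a finite abelian group with $|\mathcal{A}|\ge 3$. Let $M_2(p_1,p_2,p_3)$ be the graph obtained from the complete graph on $\{v_1,v_2,v_3,v_4\}$ by deleting the edge $v_2v_4$ and attaching $p_i\ge 0$ pendant vertices to $v_i$ for $i=1,2,3$, and assume $M_2(p_1,p_2,p_3)$ has diameter $3$. Then $M_2(p_1,p_2,p_3)$ is $\mathcal{A}$-vertex magic if and only if $p_1=p_3=0$, $p_2\ge 2$, and $\mathcal{A}$ contains a square element.
   Context: An element $g\in\mathcal{A}$ is a square if $g\neq 0$ and $g=2h$ for some $h\in\mathcal{A}$. A map $\ell:V(G)\to\mathcal{A}\setminus\{0\}$ is an $\mathcal{A}$-vertex magic labeling if there is $\mu\in\mathcal{A}$ with $\sum_{u\in N(v)}\ell(u)=\mu$ for every vertex $v$; $G$ is $\mathcal{A}$-vertex magic if such a labeling exists. *)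

From HB Require Import structures.
From mathcomp Require Import all_boot all_order all_algebra.
Set Implicit Arguments. Unset Strict Implicit. Unset Printing Implicit Defensive.
Import GRing.Theory.
Local Open Scope ring_scope.

(* A simple graph is a symmetric irreflexive relation e on a finType T. *)

Fixpoint reach (T : finType) (e : rel T) (k : nat) (u v : T) : bool :=
  match k with
  | 0%N => u == v
  | k'.+1 => reach e k' u v || [exists w, reach e k' u w && e w v]
  end.

Definition has_diameter (T : finType) (e : rel T) (d : nat) : Prop :=
  (forall u v, reach e d u v) /\ (exists u v, ~~ reach e d.-1 u v).

Definition is_square (A : zmodType) (g : A) : Prop :=
  g != 0 /\ exists h : A, g = h *+ 2.

Definition vertex_magic (T : finType) (e : rel T) (A : zmodType) : Prop :=
  exists l : T -> A, (forall v, l v != 0) /\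
    exists mu : A, forall v, \sum_(u | e v u) l u = mu.

(* Vertices of M_2(p1,p2,p3): core vertices v1..v4 as inl 0..3, and
   pendants attached to v1, v2, v3 respectively. *)
Definition M2V (p1 p2 p3 : nat) : finType :=
  ('I_4 + ('I_p1 + ('I_p2 + 'I_p3)))%type.

(* index of the core vertex a pendant is attached to (0-based: v1=0,v2=1,v3=2) *)
Definition pend_anchor (p1 p2 p3 : nat) (x : 'I_p1 + ('I_p2 + 'I_p3)) : nat :=
  match x with
  | inl _ => 0%N
  | inr (inl _) => 1%N
  | inr (inr _) => 2%N
  end.

Definition M2adj (p1 p2 p3 : nat) : rel (M2V p1 p2 p3) :=
  fun x y =>
    match x, y with
    | inl i, inl j =>
        (i != j) && ~~ (((i == 1 :> nat) && (j == 3 :> nat))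
                        || ((i == 3 :> nat) && (j == 1 :> nat)))
    | inl i, inr q => (i == pend_anchor q :> nat)
    | inr q, inl j => (j == pend_anchor q :> nat)
    | inr _, inr _ => false
    end.

(* Write a, b, c, d for the labels of v1, v2, v3, v4, where v2v4 is the missing
   edge, so the neighbourhood sum of v4 is a + c.  A pendant at v1 (sum a) or at
   v3 (sum c) would force c = 0 or a = 0.  Diameter 3 then forces a pendant at v2;
   its sum b is the magic constant, the sum a + c + (pendant labels) at v2 shows
   that the pendant labels add up to 0, which excludes a single pendant, and the
   sums at v1 and v3 give c + d = 0 = a + d, so b = a + c = 2a is a square.
   Conversely, if g = 2h <> 0, then a = c = h, b = g, d = -h together with nonzero
   pendant labels summing to 0 (pairs h, -h, plus h, h, -2h if p2 is odd) form a
   magic labelling with constant g. *)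

From HB Require Import structures.
From mathcomp Require Import all_boot all_order all_algebra.
Set Implicit Arguments. Unset Strict Implicit. Unset Printing Implicit Defensive.
Import GRing.Theory.
Local Open Scope ring_scope.

(* [core k] is the paper's vertex v_(k+1). *)
Local Notation core k := (inl (@Ordinal 4 k isT)).

Lemma reach2_via (T : finType) (e : rel T) u v w :
  [|| u == v, e u v | e u w && e w v] -> reach e 2 u v.
Proof.
case/or3P=> [uv|euv|/andP [euw ewv]] /=.
- by rewrite uv.
- by apply/orP; left; apply/orP; right; apply/existsP; exists u; rewrite eqxx.
- apply/orP; right; apply/existsP; exists w; rewrite ewv andbT.
  by apply/orP; right; apply/existsP; exists u; rewrite eqxx.
Qed.

Lemma zero_sum_nonzero_seq (A : zmodType) (h : A) n :
    h != 0 -> h *+ 2 != 0 -> (1 < n)%N ->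
  exists s : seq A, [/\ size s = n, all (fun x => x != 0) s & \sum_(x <- s) x = 0].
Proof.
move=> h_neq0 h2_neq0; elim/ltn_ind: n => -[|[|[|[|n]]]] IHn // _.
- by exists [:: h; - h]; rewrite /= oppr_eq0 h_neq0 !big_cons big_nil addr0 subrr.
- exists [:: h; h; - (h *+ 2)]; rewrite /= oppr_eq0 h_neq0 h2_neq0.
  by rewrite !big_cons big_nil addr0 addrA -mulr2n subrr.
- have [//|s [size_s s_neq0 sum_s]] := IHn n.+2 (leqnSn _).
  exists [:: h, - h & s]; rewrite /= size_s oppr_eq0 h_neq0 s_neq0.
  by rewrite !big_cons sum_s addr0 subrr.
Qed.

Lemma M2V_ind p1 p2 p3 (P : M2V p1 p2 p3 -> Prop) :
    P (core 0) -> P (core 1) -> P (core 2) -> P (core 3) ->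
    (forall i, P (inr (inl i))) -> (forall i, P (inr (inr (inl i)))) ->
    (forall i, P (inr (inr (inr i)))) ->
  forall v, P v.
Proof.
move=> P0 P1 P2 P3 Q1 Q2 Q3 [[[|[|[|[|//]]]] lt_k4]|[|[|]]] //;
  by rewrite (bool_irrelevance lt_k4 isT).
Qed.

Lemma sum_M2V (A : zmodType) p1 p2 p3 (F : M2V p1 p2 p3 -> A) :
  \sum_u F u = F (core 0) + F (core 1) + F (core 2) + F (core 3)
    + (\sum_(i < p1) F (inr (inl i)) + (\sum_(i < p2) F (inr (inr (inl i)))
    + \sum_(i < p3) F (inr (inr (inr i))))).
Proof.
rewrite !big_sumType /= !big_ord_recl big_ord0 addr0 !addrA.
by do ![congr (_ + _)]; congr (F (inl _)); apply: val_inj.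
Qed.

Section NeighbourhoodSums.
Variables (A : zmodType) (p1 p2 p3 : nat) (l : M2V p1 p2 p3 -> A).

Let simp_sum := (big1_eq, big_ord0, addr0, add0r).

Lemma sum_adj_core0 : \sum_(u | M2adj (core 0) u) l u =
  l (core 1) + l (core 2) + l (core 3) + \sum_(i < p1) l (inr (inl i)).
Proof. by rewrite big_mkcond sum_M2V /= !simp_sum. Qed.

Lemma sum_adj_core1 : \sum_(u | M2adj (core 1) u) l u =
  l (core 0) + l (core 2) + \sum_(i < p2) l (inr (inr (inl i))).
Proof. by rewrite big_mkcond sum_M2V /= !simp_sum. Qed.

Lemma sum_adj_core2 : \sum_(u | M2adj (core 2) u) l u =
  l (core 0) + l (core 1) + l (core 3) + \sum_(i < p3) l (inr (inr (inr i))).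
Proof. by rewrite big_mkcond sum_M2V /= !simp_sum. Qed.

Lemma sum_adj_core3 : \sum_(u | M2adj (core 3) u) l u = l (core 0) + l (core 2).
Proof. by rewrite big_mkcond sum_M2V /= !simp_sum. Qed.

Lemma sum_adj_pendant0 i : \sum_(u | M2adj (inr (inl i)) u) l u = l (core 0).
Proof. by rewrite big_mkcond sum_M2V /= !simp_sum. Qed.

Lemma sum_adj_pendant1 i : \sum_(u | M2adj (inr (inr (inl i))) u) l u = l (core 1).
Proof. by rewrite big_mkcond sum_M2V /= !simp_sum. Qed.

Lemma sum_adj_pendant2 i : \sum_(u | M2adj (inr (inr (inr i))) u) l u = l (core 2).
Proof. by rewrite big_mkcond sum_M2V /= !simp_sum. Qed.

End NeighbourhoodSums.

Section MagicLabelling.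
Variables (A : zmodType) (p1 p2 p3 : nat) (l : M2V p1 p2 p3 -> A) (mu : A).
Hypothesis l_neq0 : forall v, l v != 0.
Hypothesis l_magic : forall v, \sum_(u | M2adj v u) l u = mu.

Lemma magic_M2_p1_eq0 : p1 = 0%N.
Proof.
case: (posnP p1) => // p1_gt0.
have l2_eq0 : l (core 2) = 0.
  apply: (addrI (l (core 0))); rewrite addr0 -sum_adj_core3.
  by rewrite -(sum_adj_pendant0 l (Ordinal p1_gt0)) !l_magic.
by have := l_neq0 (core 2); rewrite l2_eq0 eqxx.
Qed.

Lemma magic_M2_p3_eq0 : p3 = 0%N.
Proof.
case: (posnP p3) => // p3_gt0.
have l0_eq0 : l (core 0) = 0.
  apply: (addIr (l (core 2))); rewrite add0r -sum_adj_core3.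
  by rewrite -(sum_adj_pendant2 l (Ordinal p3_gt0)) !l_magic.
by have := l_neq0 (core 0); rewrite l0_eq0 eqxx.
Qed.

Lemma magic_M2_p2_gt1 : (0 < p2)%N -> (1 < p2)%N.
Proof.
move=> p2_gt0; rewrite ltn_neqAle p2_gt0 andbT; apply/eqP => p2_eq1.
have pendants_sum0 : \sum_(i < p2) l (inr (inr (inl i))) = 0.
  apply: (addrI (l (core 0) + l (core 2))).
  by rewrite addr0 -sum_adj_core1 -sum_adj_core3 !l_magic.
subst p2; move: pendants_sum0; rewrite big_ord1 => /eqP.
by rewrite (negbTE (l_neq0 _)).
Qed.

Lemma magic_M2_square : (0 < p2)%N -> is_square mu.
Proof.
move=> p2_gt0.
have l1_mu : l (core 1) = mu by rewrite -(sum_adj_pendant1 l (Ordinal p2_gt0)).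
have pendants0_sum0 : \sum_(i < p1) l (inr (inl i)) = 0.
  by apply: big1 => i _; have := ltn_ord i; rewrite [X in (_ < X)%N]magic_M2_p1_eq0.
have pendants2_sum0 : \sum_(i < p3) l (inr (inr (inr i))) = 0.
  by apply: big1 => i _; have := ltn_ord i; rewrite [X in (_ < X)%N]magic_M2_p3_eq0.
have l23_eq0 : l (core 2) + l (core 3) = 0.
  apply: (addrI mu); rewrite addrA addr0 -{1}l1_mu -(l_magic (core 0)).
  by rewrite sum_adj_core0 pendants0_sum0 addr0.
have l03_eq0 : l (core 0) + l (core 3) = 0.
  apply: (addrI mu); rewrite addrA addr0 -{1}l1_mu -(l_magic (core 2)).
  by rewrite sum_adj_core2 pendants2_sum0 addr0 (addrC (l (core 0))).
have l2_l0 : l (core 2) = l (core 0) by apply: (addIr (l (core 3))); rewrite l23_eq0.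
split; first by rewrite -l1_mu.
by exists (l (core 0)); rewrite -(l_magic (core 3)) sum_adj_core3 l2_l0 mulr2n.
Qed.

End MagicLabelling.

Lemma M2_000_not_diameter3 : ~ has_diameter (@M2adj 0 0 0) 3.
Proof.
move=> [_ [u [v]]]; apply/negP/negPn; apply: (reach2_via (w := core 0)).
by case: u => [[[|[|[|[|?]]]] ?]|[[]|[[]|[]]]] //;
   case: v => [[[|[|[|[|?]]]] ?]|[[]|[[]|[]]]].
Qed.

Lemma M2_magic_of_square (A : zmodType) (p2 : nat) (g : A) :
  (1 < p2)%N -> is_square g -> vertex_magic (@M2adj 0 p2 0) A.
Proof.
move=> p2_gt1 [g_neq0 [h g_2h]].
have h_neq0 : h != 0 by apply: contraNneq g_neq0 => h0; rewrite g_2h h0 mul0rn.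
have h2_neq0 : h *+ 2 != 0 by rewrite -g_2h.
have [s [<- s_neq0 sum_s]] := zero_sum_nonzero_seq h_neq0 h2_neq0 p2_gt1.
rewrite (big_nth 0) big_mkord in sum_s.
pose l (v : M2V 0 (size s) 0) := match v with
  | inl i => nth 0 [:: h; g; h; - h] i
  | inr (inr (inl i)) => nth 0 s i
  | _ => 0 end.
exists l; split.
  elim/M2V_ind => [||||[]//|i|[]//] /=; rewrite ?oppr_eq0 //.
  exact: (allP s_neq0) _ (mem_nth 0 (ltn_ord i)).
exists g; elim/M2V_ind => [||||[]//|i|[]//].
- by rewrite sum_adj_core0 big_ord0 /= addrK addr0.
- by rewrite sum_adj_core1 sum_s addr0 -mulr2n g_2h.
- by rewrite sum_adj_core2 big_ord0 /= (addrC h) addrK addr0.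
- by rewrite sum_adj_core3 -mulr2n g_2h.
- by rewrite sum_adj_pendant1.
Qed.

Theorem proposition4p2 (A : finZmodType) (p1 p2 p3 : nat) :
  (3 <= #|A|)%N ->
  has_diameter (@M2adj p1 p2 p3) 3 ->
  (vertex_magic (@M2adj p1 p2 p3) A <->
   [/\ p1 = 0%N, p3 = 0%N, (2 <= p2)%N & exists g : A, is_square g]).
Proof.
(* The bound on #|A| is redundant: 0, h and 2h are distinct when 2h is a square. *)
move=> _ diam3; split=> [[l [l_neq0 [mu l_magic]]]|[-> -> p2_gt1 [g g_sq]]].
- have p1_eq0 := magic_M2_p1_eq0 l_neq0 l_magic.
  have p3_eq0 := magic_M2_p3_eq0 l_neq0 l_magic.
  have p2_gt0 : (0 < p2)%N.
    by case: (posnP p2) diam3 => // ->; rewrite p1_eq0 p3_eq0 => /M2_000_not_diameter3.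
  split=> //; first exact: magic_M2_p2_gt1 l_neq0 l_magic p2_gt0.
  by exists mu; apply: magic_M2_square l_neq0 l_magic p2_gt0.
- exact: M2_magic_of_square p2_gt1 g_sq.
Qed.
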